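(* Let $n,k\ge1$ be integers and let $\lambda x.\vec t$ be a closed abstraction with $\lambda x.\vec t\in\llbracket\sharp(\mathbb B^n)\multimap\sharp(\mathbb B^k)\rrbracket_\emptyset$. (1) If $k\ge n$, then $\lambda x.\vec t$ represents an isometry $\mathbb C^{2^n}\to\mathbb C^{2^k}$. (2) If $k=n$, then $\lambda x.\vec t$ represents a unitary operator $\mathbb C^{2^n}\to\mathbb C^{2^n}$. Furthermore, if $k<n$, then $\llbracket\sharp(\mathbb B^n)\multimap\sharp(\mathbb B^k)\rrbracket_\emptyset=\emptyset$, i.e. the type is uninhabited.
   Context: **Syntax.** Terms: $t ::= x \mid |0\rangle \mid |1\rangle \mid \mathsf{if}\ t\ \mathsf{then}\ \vec s\ \mathsf{else}\ \vec s \mid \lambda x.\vec t \mid t\,t \mid (t,t) \mid \mathsf{let}\ (x,y)=t\ \mathsf{in}\ \vec t$. Superpositions: $\vec t ::= t \mid \vec 0 \mid \alpha\cdot\vec t \mid \vec t+\vec t$, with $\alpha$ an algebraic complex number. Basis values: $v ::= |0\rangle\mid|1\rangle\mid\lambda x.\vec t\mid(v,v)$. Values are superpositions of basis values. **Equivalence.** Superpositions are taken modulo the vector-space congruence $\equiv$: $+$ is commutative and associative, $\vec0$ is neutral, $0\cdot\vec t\equiv\vec0$, $1\cdot\vec t\equiv\vec t$, $\alpha\cdot(\beta\cdot\vec t)\equiv\alpha\beta\cdot\vec t$, $\alpha\cdot\vec t+\beta\cdot\vec t\equiv(\alpha+\beta)\cdot\vec t$, and $\alpha\cdot(\vec t_1+\vec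 t_2)\equiv\alpha\cdot\vec t_1+\alpha\cdot\vec t_2$. **Linear extension.** Constructors are extended linearly in their evaluated positions: - $s(\sum_i\alpha_i t_i)\triangleq\sum_i\alpha_i\cdot s\,t_i$; - $(\sum_i\alpha_is_i,\sum_j\beta_jt_j)\triangleq\sum_{i,j}\alpha_i\beta_j\cdot(s_i,t_j)$; - $\mathsf{if}$ and $\mathsf{let}$ distribute over a superposed guard or scrutinee. **Reduction $\rightsquigarrow$ (call-by-value, on closed superpositions).** - $\mathsf{if}\ |0\rangle\ \mathsf{then}\ \vec s\ \mathsf{else}\ \vec t\rightsquigarrow\vec s$ and $\mathsf{if}\ |1\rangle\ \mathsf{then}\ \vec s\ \mathsf{else}\ \vec t\rightsquigarrow\vec t$. - $(\lambda x.\vec t)\,v\rightsquigarrow\vec t[v/x]$ for a basis value $v$. - $\mathsf{let}\ (x,y)=(v,w)\ \mathsf{in}\ \vec t\rightsquigarrow\vec t[v/x,w/y]$. - Congruence rules reduce, using the linear extension: inside the guard of $\mathsf{if}$; in the argument of an application; in the function position when the argument is a basis value; in the first component of a pair; in the second component when the first is a basis value; and in the scrutinee of $\mathsf{let}$. - A superposition in canonical form $\sum_i\alpha_it_i+\sum_j\beta_jv_j$ reduces to $\sum_i\alpha_is_i+\sum_j\beta_jv_j$ when each $t_i\rightsquigarrow s_i$. Canonical form means: the superposed terms are pairwise distinct and all coefficients are nonzero. - Reduction is closed under $\equiv$. $\rightsquigarrow^*$ denotes the reflexive transitive closure of $\rightsquigarrow$. **Inner product and unit values.** On closed values, $\langle\sum_i\alpha_iv_i\mid\sum_j\beta_jw_j\rangle=\sum_{i,j}\overline{\alpha_i}\beta_j\delta_{v_i,w_j}$,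 where $\delta$ is the Kronecker delta on basis values. Let $\mathcal S_1$ be the set of closed values $\vec v$ with $|\langle\vec v|\vec v\rangle|^2=1$. **Base and span.** $\mathrm{base}(\vec v)$ is the set of basis values occurring with nonzero coefficient in $\vec v$. For a set $S$ of closed values, $\flat S=\bigcup_{\vec v\in S}\mathrm{base}(\vec v)$, and $\mathsf{span}(S)$ is the set of finite linear combinations of elements of $S$. **Realizability.** $\vec t\Vdash S$ iff $\vec t\rightsquigarrow^*\vec v$ for some $\vec v\in S$ (up to $\equiv$). **Types.** $A ::= X\mid A\multimap A\mid A\Rightarrow A\mid A\times A\mid Q\mid\S A\mid\forall X.A$, where ground types are $Q ::= \mathbb B\mid\sharp Q\mid\S Q\mid Q\times Q$. **Unitary semantics** (for $\tau$ mapping type variables to subsets of $\mathcal S_1$): - $\llbracket X\rrbracket_\tau=\tau(X)$; - $\llbracket\mathbb B\rrbracket_\tau=\{|0\rangle,|1\rangle\}$; - $\llbracket\sharp A\rrbracket_\tau=\mathsf{span}(\llbracket A\rrbracket_\tau)\cap\mathcal S_1$; - $\llbracket\S A\rrbracket_\tau=\llbracket A\rrbracket_\tau$; - $\llbracket A\multimap B\rrbracket_\tau=\{\lambda x.\vec t:\forall\vec v\in\llbracket A\rrbracket_\tau,(\lambda x.\vec t)\vec v\Vdash\llbracket B\rrbracket_\tau\}$; - $\llbracket A\Rightarrow B\rrbracket_\tau=\{\lambda x.\vec t:\forall v\in\flat\llbracket A\rrbracket_\tau,(\lambda x.\vec t)v\Vdash\llbracket B\rrbracket_\tau\}$; - $\llbracket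 A\times B\rrbracket_\tau=\{(\vec v,\vec w):\vec v\in\llbracket A\rrbracket_\tau,\vec w\in\llbracket B\rrbracket_\tau\}$; - $\llbracket\forall X.A\rrbracket_\tau=\bigcap_{R\subseteq\mathcal S_1}\llbracket A\rrbracket_{\tau\cup\{X\mapsto R\}}$. **Qubit notation.** $\mathbb B^1=\mathbb B$ and $\mathbb B^{m+1}=\mathbb B\times\mathbb B^m$. For $0\le i<2^n$ with binary digits $i_1\dots i_n$, let $|i\rangle\triangleq(|i_1\rangle,(|i_2\rangle,\dots(|i_{n-1}\rangle,|i_n\rangle)\dots))$. **Representation.** The linear map $\lfloor\cdot\rfloor$ sends a closed value $\sum_{i=0}^{2^n-1}\alpha_i\cdot|i\rangle$ to the vector $(\alpha_0,\dots,\alpha_{2^n-1})^T\in\mathbb C^{2^n}$. The closed abstraction $\lambda x.\vec t$ represents an operator $\mathcal F:\mathbb C^{2^n}\to\mathbb C^{2^k}$ if, for all $\vec v\in\llbracket\sharp(\mathbb B^n)\rrbracket_\emptyset$ and $\vec w\in\llbracket\sharp(\mathbb B^k)\rrbracket_\emptyset$, we have $(\lambda x.\vec t)\,\vec v\rightsquigarrow^*\vec w$ if and only if $\mathcal F(\lfloor\vec v\rfloor)=\lfloor\vec w\rfloor$. **Isometry and unitarity.** An operator $\mathcal F:\mathbb C^{2^n}\to\mathbb C^{2^k}$ is an isometry if $\langle\mathcal F(u)|\mathcal F(v)\rangle=\langle u|v\rangle$ for all $u,v$. An isometry with $k=n$ is unitary. *)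

From mathcomp Require Import all_boot all_order all_algebra algC.
From Stdlib Require List.
From Stdlib Require Import ClassicalEpsilon.
Set Implicit Arguments. Unset Strict Implicit. Unset Printing Implicit Defensive.
Import Order.TTheory GRing.Theory Num.Theory.
Local Open Scope ring_scope.

Inductive term : Type :=
| Var  (x : nat)
| Ket0
| Ket1
| Ite  (t : term) (s1 s2 : sup)
| Lam  (x : nat) (b : sup)
| App  (t u : term)
| Pair (t u : term)
| Let  (x y : nat) (t : term) (b : sup)
with sup : Type :=
| STerm  (t : term)
| SZero
| SScale (a : algC) (s : sup)
| SAdd   (s1 s2 : sup).

Inductive tequiv : term -> term -> Prop :=
| teq_refl t : tequiv t t
| teq_sym t u : tequiv t u -> tequiv u t
| teq_trans t u w : tequiv t u -> tequiv u w -> tequiv t w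
| teq_ite t t' s1 s1' s2 s2' :
    tequiv t t' -> sequiv s1 s1' -> sequiv s2 s2' -> tequiv (Ite t s1 s2) (Ite t' s1' s2')
| teq_lam x b b' : sequiv b b' -> tequiv (Lam x b) (Lam x b')
| teq_app t t' u u' : tequiv t t' -> tequiv u u' -> tequiv (App t u) (App t' u')
| teq_pair t t' u u' : tequiv t t' -> tequiv u u' -> tequiv (Pair t u) (Pair t' u')
| teq_let x y t t' b b' :
    tequiv t t' -> sequiv b b' -> tequiv (Let x y t b) (Let x y t' b')
with sequiv : sup -> sup -> Prop :=
| seq_refl s : sequiv s s
| seq_sym s s' : sequiv s s' -> sequiv s' s
| seq_trans s1 s2 s3 : sequiv s1 s2 -> sequiv s2 s3 -> sequiv s1 s3
| seq_term t t' : tequiv t t' -> sequiv (STerm t) (STerm t')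
| seq_scale a s s' : sequiv s s' -> sequiv (SScale a s) (SScale a s')
| seq_add s1 s1' s2 s2' : sequiv s1 s1' -> sequiv s2 s2' -> sequiv (SAdd s1 s2) (SAdd s1' s2')
| seq_addC s1 s2 : sequiv (SAdd s1 s2) (SAdd s2 s1)
| seq_addA s1 s2 s3 : sequiv (SAdd (SAdd s1 s2) s3) (SAdd s1 (SAdd s2 s3))
| seq_add0 s : sequiv (SAdd SZero s) s
| seq_scale0 s : sequiv (SScale 0 s) SZero
| seq_scale1 s : sequiv (SScale 1 s) s
| seq_scaleA a b s : sequiv (SScale a (SScale b s)) (SScale (a * b) s)
| seq_scaleD a b s : sequiv (SAdd (SScale a s) (SScale b s)) (SScale (a + b) s)
| seq_scaleDr a s1 s2 : sequiv (SScale a (SAdd s1 s2)) (SAdd (SScale a s1) (SScale a s2)).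

Fixpoint tclosed (bs : seq nat) (t : term) : bool :=
  match t with
  | Var x => x \in bs
  | Ket0 | Ket1 => true
  | Ite t s1 s2 => [&& tclosed bs t, sclosed bs s1 & sclosed bs s2]
  | Lam x b => sclosed (x :: bs) b
  | App t u | Pair t u => tclosed bs t && tclosed bs u
  | Let x y t b => tclosed bs t && sclosed [:: x, y & bs] b
  end
with sclosed (bs : seq nat) (s : sup) : bool :=
  match s with
  | STerm t => tclosed bs t
  | SZero => true
  | SScale _ s => sclosed bs s
  | SAdd s1 s2 => sclosed bs s1 && sclosed bs s2
  end.

(* substitution of a (closed) term v for the variable x; no capture can
   occur since only closed values are ever substituted. *)
Fixpoint tsubst (x : nat) (v : term) (t : term) : term :=
  match t with
  | Var y => if y == x then v else Var y
  | Ket0 => Ket0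
  | Ket1 => Ket1
  | Ite t s1 s2 => Ite (tsubst x v t) (ssubst x v s1) (ssubst x v s2)
  | Lam y b => if y == x then Lam y b else Lam y (ssubst x v b)
  | App t u => App (tsubst x v t) (tsubst x v u)
  | Pair t u => Pair (tsubst x v t) (tsubst x v u)
  | Let y z t b =>
      Let y z (tsubst x v t) (if (y == x) || (z == x) then b else ssubst x v b)
  end
with ssubst (x : nat) (v : term) (s : sup) : sup :=
  match s with
  | STerm t => STerm (tsubst x v t)
  | SZero => SZero
  | SScale a s => SScale a (ssubst x v s)
  | SAdd s1 s2 => SAdd (ssubst x v s1) (ssubst x v s2)
  end.

Fixpoint is_basis (t : term) : bool :=
  match t with
  | Ket0 | Ket1 | Lam _ _ => true
  | Pair t u => is_basis t && is_basis u
  | _ => false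
  end.

Fixpoint svalue (s : sup) : bool :=
  match s with
  | STerm t => is_basis t
  | SZero => true
  | SScale _ s => svalue s
  | SAdd s1 s2 => svalue s1 && svalue s2
  end.

Definition closed_value (s : sup) : Prop :=
  exists s', sequiv s s' /\ svalue s' && sclosed [::] s'.

Fixpoint sbind (f : term -> sup) (s : sup) : sup :=
  match s with
  | STerm t => f t
  | SZero => SZero
  | SScale a s => SScale a (sbind f s)
  | SAdd s1 s2 => SAdd (sbind f s1) (sbind f s2)
  end.

Definition slift (g : term -> term) (s : sup) : sup := sbind (fun t => STerm (g t)) s.

Definition app_sup (f : term) (s : sup) : sup := slift (App f) s.

Definition pair_sup (s1 s2 : sup) : sup :=
  sbind (fun a => sbind (fun b => STerm (Pair a b)) s2) s1.

Definition sum_terms (l : seq (algC * term)) : sup :=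
  foldr (fun p acc => SAdd (SScale p.1 (STerm p.2)) acc) SZero l.

Definition sum_sups (l : seq (algC * sup)) : sup :=
  foldr (fun p acc => SAdd (SScale p.1 p.2) acc) SZero l.

Inductive tstep : term -> sup -> Prop :=
| ts_if0 s1 s2 : tstep (Ite Ket0 s1 s2) s1
| ts_if1 s1 s2 : tstep (Ite Ket1 s1 s2) s2
| ts_beta x b v : is_basis v -> tstep (App (Lam x b) v) (ssubst x v b)
| ts_let x y v w b :
    is_basis v -> is_basis w -> tstep (Let x y (Pair v w) b) (ssubst y w (ssubst x v b))
| ts_if_guard t s s1 s2 : tstep t s -> tstep (Ite t s1 s2) (slift (fun t' => Ite t' s1 s2) s)
| ts_app_arg f u s : tstep u s -> tstep (App f u) (slift (App f) s)
| ts_app_fun f v s : is_basis v -> tstep f s -> tstep (App f v) (slift (fun f' => App f' v) s)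
| ts_pair_fst t u s : tstep t s -> tstep (Pair t u) (slift (fun t' => Pair t' u) s)
| ts_pair_snd v u s : is_basis v -> tstep u s -> tstep (Pair v u) (slift (Pair v) s)
| ts_let_scrut x y t b s :
    tstep t s -> tstep (Let x y t b) (slift (fun t' => Let x y t' b) s).

(* reduction of superpositions: a superposition in canonical form
   sum_i a_i t_i + sum_j b_j v_j (terms pairwise distinct modulo the
   congruence, coefficients nonzero, v_j basis values) reduces to
   sum_i a_i s_i + sum_j b_j v_j when each t_i reduces to s_i;
   the relation is closed under the congruence. *)
Inductive step : sup -> sup -> Prop :=
| Step (ts : seq (algC * term * sup)) (vs : seq (algC * term)) (S S' : sup) :
    ts <> [::] ->
    sequiv S (SAdd (sum_terms [seq (p.1.1, p.1.2) | p <- ts]) (sum_terms vs)) ->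
    List.ForallOrdPairs (fun t u => ~ tequiv t u)
      ([seq p.1.2 | p <- ts] ++ [seq p.2 | p <- vs]) ->
    all (fun a => a != 0) ([seq p.1.1 | p <- ts] ++ [seq p.1 | p <- vs]) ->
    List.Forall (fun p => tstep p.1.2 p.2) ts ->
    all (fun p => is_basis p.2) vs ->
    sequiv S' (SAdd (sum_sups [seq (p.1.1, p.2) | p <- ts]) (sum_terms vs)) ->
    step S S'.

Inductive msteps : sup -> sup -> Prop :=
| ms_refl s : msteps s s
| ms_step s1 s2 s3 : step s1 s2 -> msteps s2 s3 -> msteps s1 s3.

Definition reduces_to (s w : sup) : Prop := exists s', msteps s s' /\ sequiv s' w.

Definition realizes (s : sup) (S : sup -> Prop) : Prop :=
  exists w, reduces_to s w /\ S w.

Fixpoint flat (s : sup) : seq (algC * term) :=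
  match s with
  | STerm t => [:: (1, t)]
  | SZero => [::]
  | SScale a s => [seq (a * p.1, p.2) | p <- flat s]
  | SAdd s1 s2 => flat s1 ++ flat s2
  end.

Definition delta (v w : term) : algC :=
  if excluded_middle_informative (tequiv v w) then 1 else 0.

Definition ip (s1 s2 : sup) : algC :=
  \sum_(p <- flat s1) \sum_(q <- flat s2) (p.1)^* * q.1 * delta p.2 q.2.

Definition S1 (s : sup) : Prop := closed_value s /\ `|ip s s| ^+ 2 = 1.

Definition coef (s : sup) (b : term) : algC :=
  \sum_(q <- flat s) q.1 * delta q.2 b.

Definition base (v : sup) (b : term) : Prop :=
  is_basis b /\ tclosed [::] b /\ coef v b != 0.

Definition flatS (S : sup -> Prop) (b : term) : Prop := exists v, S v /\ base v b.

Definition span (S : sup -> Prop) (s : sup) : Prop :=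
  exists l : seq (algC * sup), List.Forall (fun p => S p.2) l /\ sequiv s (sum_sups l).

Inductive ty : Type :=
| TVar (X : nat)
| TLolli (A B : ty)
| TArrow (A B : ty)
| TProd (A B : ty)
| TBool
| TSharp (A : ty)
| TSect (A : ty)
| TForall (X : nat) (A : ty).

Definition env := nat -> sup -> Prop.
Definition env0 : env := fun _ _ => False.
Definition env_upd (tau : env) (X : nat) (R : sup -> Prop) : env :=
  fun Y => if Y == X then R else tau Y.

Fixpoint sem (A : ty) (tau : env) : sup -> Prop :=
  match A with
  | TVar X => tau X
  | TBool => fun s => s = STerm Ket0 \/ s = STerm Ket1
  | TSharp A => fun s => span (sem A tau) s /\ S1 s
  | TSect A => sem A tau
  | TLolli A B => fun s => exists x b, s = STerm (Lam x b) /\ tclosed [::] (Lam x b) /\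
      forall v, sem A tau v -> realizes (app_sup (Lam x b) v) (sem B tau)
  | TArrow A B => fun s => exists x b, s = STerm (Lam x b) /\ tclosed [::] (Lam x b) /\
      forall v, flatS (sem A tau) v -> realizes (STerm (App (Lam x b) v)) (sem B tau)
  | TProd A B => fun s => exists v w, sem A tau v /\ sem B tau w /\ s = pair_sup v w
  | TForall X A => fun s => forall R : sup -> Prop, (forall r, R r -> S1 r) ->
      sem A (env_upd tau X R) s
  end.

(* B^1 = B, B^(m+1) = B x B^m  (B^0 is junk, never used) *)
Fixpoint Bn (n : nat) : ty :=
  match n with
  | 0 => TBool
  | 1 => TBool
  | S m => TProd TBool (Bn m)
  end.

Definition bitket (b : nat) : term := if b == 0%N then Ket0 else Ket1.

(* |i> = (|i_1>, (|i_2>, ... (|i_{n-1}>, |i_n>)...)), i_1 most significant *)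
Fixpoint ket (n i : nat) : term :=
  match n with
  | 0 => Ket0
  | 1 => bitket i
  | S m => Pair (bitket (i %/ 2 ^ m)) (ket m (i %% 2 ^ m))
  end.

Definition floorv (n : nat) (v : sup) : 'cV[algC]_(2 ^ n) :=
  \col_(i < 2 ^ n) coef v (ket n i).

Definition represents (n k : nat) (lam : term)
    (F : 'cV[algC]_(2 ^ n) -> 'cV[algC]_(2 ^ k)) : Prop :=
  forall v w, sem (TSharp (Bn n)) env0 v -> sem (TSharp (Bn k)) env0 w ->
    (reduces_to (app_sup lam v) w <-> F (floorv n v) = floorv k w).

Definition cdot (m : nat) (u v : 'cV[algC]_m) : algC := \sum_(i < m) (u i 0)^* * v i 0.

Definition isometry_op (m p : nat) (F : 'cV[algC]_m -> 'cV[algC]_p) : Prop :=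
  forall u v, cdot (F u) (F v) = cdot u v.

Definition unitary_op (m : nat) (F : 'cV[algC]_m -> 'cV[algC]_m) : Prop := isometry_op F.

Arguments represents : clear implicits.

From mathcomp Require Import all_boot all_order all_algebra algC ring zify.
From Stdlib Require Import ClassicalEpsilon.
Set Implicit Arguments. Unset Strict Implicit. Unset Printing Implicit Defensive.
Import Order.TTheory GRing.Theory Num.Theory.
Local Open Scope ring_scope.

(* Modulo the vector-space congruence a superposition is determined by its
   coefficients on terms, and a reduction step has no freedom: it replaces every
   redex by its unique reduct and keeps the basis values. Reduction is thus the
   iteration of a single linear map [sreduct], and a value reached from [s] is
   [iter m sreduct s] for every large enough [m]. Taking [m] uniform over the
   kets |i>, linearity shows that a realizer of #B^n -o #B^k represents the
   matrix whose i-th column is the value of [lam |i>]. That matrix maps unit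
   vectors to unit vectors, so by polarization it is an isometry, which forces
   2^n <= 2^k. *)

(** * Shape of the congruence *)

Scheme tequiv_mind := Induction for tequiv Sort Prop
  with sequiv_mind := Induction for sequiv Sort Prop.
Combined Scheme equiv_mutind from tequiv_mind, sequiv_mind.
Scheme term_mind := Induction for term Sort Prop
  with sup_mind := Induction for sup Sort Prop.
Combined Scheme syntax_mutind from term_mind, sup_mind.

Ltac equiv_rule := first [apply: teq_refl | apply: teq_ite | apply: teq_lam
  | apply: teq_app | apply: teq_pair | apply: teq_let | apply: seq_refl
  | apply: seq_addC | apply: seq_addA | apply: seq_add0 | apply: seq_scale0
  | apply: seq_scale1 | apply: seq_scaleA | apply: seq_scaleD | apply: seq_scaleDr
  | apply: seq_term | apply: seq_scale | apply: seq_add].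
Ltac equiv_auto := repeat first [assumption | equiv_rule]; auto.
Ltac seq_via s := apply: (@seq_trans _ s).

Lemma subst_equiv_body x v :
  (forall t t', tequiv t t' -> tequiv (tsubst x v t) (tsubst x v t')) /\
  (forall s s', sequiv s s' -> sequiv (ssubst x v s) (ssubst x v s')).
Proof.
by apply: equiv_mutind; intros; simpl; repeat case: ifP => _; equiv_auto;
  econstructor; eauto.
Qed.

Lemma subst_equiv_value x v v' : tequiv v v' ->
  (forall t, tequiv (tsubst x v t) (tsubst x v' t)) /\
  (forall s, sequiv (ssubst x v s) (ssubst x v' s)).
Proof.
by move=> hv; apply: syntax_mutind; intros; simpl; repeat case: ifP => _; equiv_auto.
Qed.

Lemma ssubst_equiv x v v' b b' : tequiv v v' -> sequiv b b' ->
  sequiv (ssubst x v b) (ssubst x v' b').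
Proof.
move=> hv hb; apply: seq_trans (proj2 (subst_equiv_body x v) _ _ hb) _.
exact: (proj2 (subst_equiv_value x hv)).
Qed.

Definition same_head (t u : term) : Prop :=
  match t, u with
  | Var x, Var y => x = y
  | Ket0, Ket0 => True
  | Ket1, Ket1 => True
  | Ite a s1 s2, Ite a' s1' s2' => [/\ tequiv a a', sequiv s1 s1' & sequiv s2 s2']
  | Lam x b, Lam y b' => x = y /\ sequiv b b'
  | App a c, App a' c' => tequiv a a' /\ tequiv c c'
  | Pair a c, Pair a' c' => tequiv a a' /\ tequiv c c'
  | Let x y a b, Let x' y' a' b' => [/\ x = x', y = y', tequiv a a' & sequiv b b']
  | _, _ => False
  end.

Ltac destruct_conj := repeat match goal with
  | H : _ /\ _ |- _ => destruct H | H : and3 _ _ _ |- _ => destruct H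
  | H : and4 _ _ _ _ |- _ => destruct H end.

Lemma same_head_refl t : same_head t t.
Proof. by case: t => //= *; repeat split; equiv_auto. Qed.

Lemma same_head_sym t u : same_head t u -> same_head u t.
Proof.
case: t; case: u => //= *; destruct_conj; subst;
  repeat split; auto using teq_sym, seq_sym.
Qed.

Lemma same_head_trans t u w : same_head t u -> same_head u w -> same_head t w.
Proof.
case: t; case: u => //=; case: w => //= *; destruct_conj; subst;
  repeat split; eauto using teq_trans, seq_trans.
Qed.

Lemma tequiv_same_head t u : tequiv t u -> same_head t u.
Proof.
by elim=> /= *; try split; eauto using same_head_refl, same_head_sym, same_head_trans.
Qed.

Lemma tequiv_Ket0 u : tequiv Ket0 u -> u = Ket0.
Proof. by move/tequiv_same_head; case: u. Qed.

Lemma tequiv_Ket1 u : tequiv Ket1 u -> u = Ket1.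
Proof. by move/tequiv_same_head; case: u. Qed.

Lemma tequiv_Lam x b u : tequiv (Lam x b) u -> exists2 b', u = Lam x b' & sequiv b b'.
Proof. by move/tequiv_same_head; case: u => //= y b' [-> ?]; exists b'. Qed.

Lemma tequiv_Pair a c u : tequiv (Pair a c) u ->
  exists a' c', [/\ u = Pair a' c', tequiv a a' & tequiv c c'].
Proof. by move/tequiv_same_head; case: u => //= a' c' [? ?]; exists a', c'. Qed.

Lemma tequiv_App a c u : tequiv (App a c) u ->
  exists a' c', [/\ u = App a' c', tequiv a a' & tequiv c c'].
Proof. by move/tequiv_same_head; case: u => //= a' c' [? ?]; exists a', c'. Qed.

Lemma tequiv_Ite a s1 s2 u : tequiv (Ite a s1 s2) u ->
  exists a' s1' s2', [/\ u = Ite a' s1' s2', tequiv a a', sequiv s1 s1' & sequiv s2 s2'].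
Proof. by move/tequiv_same_head; case: u => //= a' s1' s2' [? ? ?]; exists a', s1', s2'. Qed.

Lemma tequiv_Let x y a b u : tequiv (Let x y a b) u ->
  exists a' b', [/\ u = Let x y a' b', tequiv a a' & sequiv b b'].
Proof. by move/tequiv_same_head; case: u => //= x' y' a' b' [<- <- ? ?]; exists a', b'. Qed.

Lemma tequiv_basis t u : tequiv t u -> is_basis t = is_basis u.
Proof. by elim => //= *; congruence. Qed.

Lemma tequiv_basisW t u : tequiv t u -> is_basis t -> is_basis u.
Proof. by move/tequiv_basis ->. Qed.

(** * Reduction modulo the congruence *)

Lemma tstep_not_basis t r : tstep t r -> is_basis t = false.
Proof.
by elim=> //= *; repeat match goal with H : is_basis _ = false |- _ => rewrite H end;
  rewrite ?andbF.
Qed.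

Lemma tstep_det t r r' : tstep t r -> tstep t r' -> r = r'.
Proof.
move=> H; elim: H r' => *;
  match goal with H : tstep _ _ |- _ => inversion H; subst end; try done;
  try match goal with H : tstep ?t _ |- _ =>
    have := tstep_not_basis H; simpl;
    repeat match goal with h : is_true (is_basis _) |- _ => rewrite h end; done end;
  match goal with IH : forall r', tstep ?t r' -> _ = r', h : tstep ?t _ |- _ =>
    by rewrite (IH _ h) end.
Qed.

Lemma sbind_equiv f g s s' : (forall t t', tequiv t t' -> sequiv (f t) (g t')) ->
  sequiv s s' -> sequiv (sbind f s) (sbind g s').
Proof.
move=> Hfg hs; have Hf t t' : tequiv t t' -> sequiv (f t) (f t').
  by move=> e; apply: seq_trans (Hfg _ _ e) (seq_sym (Hfg _ _ (teq_refl _))).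
apply: (@seq_trans _ (sbind f s')).
  by elim: hs => /= *; eauto using seq_sym, seq_trans; equiv_auto.
by elim: s' {hs} => /= *; equiv_auto; apply: Hfg; equiv_auto.
Qed.

Lemma slift_equiv g g' s s' : (forall t t', tequiv t t' -> tequiv (g t) (g' t')) ->
  sequiv s s' -> sequiv (slift g s) (slift g' s').
Proof. by move=> H; apply: sbind_equiv => t t' e; apply: seq_term; auto. Qed.

Lemma app_sup_equiv f s s' : sequiv s s' -> sequiv (app_sup f s) (app_sup f s').
Proof. by apply: slift_equiv => t t' e; equiv_auto. Qed.

Lemma tstep_tequiv t r t' : tstep t r -> tequiv t t' ->
  exists2 r', tstep t' r' & sequiv r r'.
Proof.
move=> hr; elim: hr t' => {t r}.
- move=> s1 s2 _ /tequiv_Ite [a [s1' [s2' [-> /tequiv_Ket0 -> h1 _]]]].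
  by exists s1'; first exact: ts_if0.
- move=> s1 s2 _ /tequiv_Ite [a [s1' [s2' [-> /tequiv_Ket1 -> _ h2]]]].
  by exists s2'; first exact: ts_if1.
- move=> x b v hv _ /tequiv_App [a [c [-> /tequiv_Lam [b' -> hb] hc]]].
  exists (ssubst x c b'); last exact: ssubst_equiv.
  by apply: ts_beta; apply: tequiv_basisW hv.
- move=> x y v w b hv hw _ /tequiv_Let [a [b' [-> /tequiv_Pair [v' [w' [-> h1 h2]]] hb]]].
  exists (ssubst y w' (ssubst x v' b')); last by do 2 apply: ssubst_equiv => //.
  by apply: ts_let; apply: tequiv_basisW; eauto.
- move=> t s s1 s2 _ IH _ /tequiv_Ite [a [s1' [s2' [-> /IH [r' hr' e] h1 h2]]]].
  exists (slift (fun t' => Ite t' s1' s2') r'); first exact: ts_if_guard.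
  by apply: slift_equiv e => *; equiv_auto.
- move=> f u s _ IH _ /tequiv_App [a [c [-> ha /IH [r' hr' e]]]].
  exists (slift (App a) r'); first exact: ts_app_arg.
  by apply: slift_equiv e => *; equiv_auto.
- move=> f v s hv _ IH _ /tequiv_App [a [c [-> /IH [r' hr' e] hc]]].
  exists (slift (fun f' => App f' c) r'); first by apply: ts_app_fun (tequiv_basisW hc hv) _.
  by apply: slift_equiv e => *; equiv_auto.
- move=> t u s _ IH _ /tequiv_Pair [a [c [-> /IH [r' hr' e] hc]]].
  exists (slift (fun t' => Pair t' c) r'); first exact: ts_pair_fst.
  by apply: slift_equiv e => *; equiv_auto.
- move=> v u s hv _ IH _ /tequiv_Pair [a [c [-> ha /IH [r' hr' e]]]].
  exists (slift (Pair a) r'); first by apply: ts_pair_snd (tequiv_basisW ha hv) _.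
  by apply: slift_equiv e => *; equiv_auto.
- move=> x y t b s _ IH _ /tequiv_Let [a [b' [-> /IH [r' hr' e] hb]]].
  exists (slift (fun t' => Let x y t' b') r'); first exact: ts_let_scrut.
  by apply: slift_equiv e => *; equiv_auto.
Qed.

Definition reduct (t : term) : sup :=
  match excluded_middle_informative (exists r, tstep t r) with
  | left H => proj1_sig (constructive_indefinite_description _ H)
  | right _ => STerm t
  end.

Lemma reduct_step t r : tstep t r -> reduct t = r.
Proof.
move=> h; rewrite /reduct; case: excluded_middle_informative => [H|[]]; last by exists r.
by case: constructive_indefinite_description => /= r' h'; apply: tstep_det h' h.
Qed.

Lemma reduct_stuck t : ~ (exists r, tstep t r) -> reduct t = STerm t.
Proof. by rewrite /reduct; case: excluded_middle_informative. Qed.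

Lemma reduct_basis t : is_basis t -> reduct t = STerm t.
Proof. by move=> hb; apply: reduct_stuck => -[r /tstep_not_basis]; rewrite hb. Qed.

Lemma reduct_equiv t t' : tequiv t t' -> sequiv (reduct t) (reduct t').
Proof.
move=> e; have [[r hr]|hn] := classic (exists r, tstep t r).
  by have [r' hr' e'] := tstep_tequiv hr e; rewrite (reduct_step hr) (reduct_step hr').
rewrite (reduct_stuck hn) reduct_stuck; first by equiv_auto.
move=> [r' hr']; apply: hn; have [r hr _] := tstep_tequiv hr' (teq_sym e); by exists r.
Qed.

Definition sreduct (s : sup) : sup := sbind reduct s.

Lemma sreduct_equiv s s' : sequiv s s' -> sequiv (sreduct s) (sreduct s').
Proof. exact/sbind_equiv/reduct_equiv. Qed.

(** * Coefficients *)

Definition teqb t u : bool := if excluded_middle_informative (tequiv t u) then true else false.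

Lemma teqbP t u : reflect (tequiv t u) (teqb t u).
Proof. by rewrite /teqb; case: excluded_middle_informative => h; constructor. Qed.

Lemma teqb_refl t : teqb t t.
Proof. exact/teqbP/teq_refl. Qed.

Lemma teqb_sym t u : teqb t u = teqb u t.
Proof. by apply/teqbP/teqbP; apply: teq_sym. Qed.

Lemma teqb_trans t u w : teqb t u -> teqb u w -> teqb t w.
Proof. by move=> /teqbP h1 /teqbP h2; apply/teqbP; apply: teq_trans h1 h2. Qed.

Lemma teqb_l t t' u : teqb t t' -> teqb t u = teqb t' u.
Proof.
move=> h; apply/idP/idP => h2; last exact: teqb_trans h h2.
by apply: teqb_trans h2; rewrite teqb_sym.
Qed.

Lemma teqb_r t u u' : teqb u u' -> teqb t u = teqb t u'.
Proof. by move=> h; rewrite teqb_sym (teqb_l _ h) teqb_sym. Qed.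

Lemma deltaE t u : delta t u = (teqb t u)%:R.
Proof. by rewrite /delta /teqb; case: excluded_middle_informative. Qed.

Lemma delta_refl t : delta t t = 1.
Proof. by rewrite deltaE teqb_refl. Qed.

Lemma delta_sym t u : delta t u = delta u t.
Proof. by rewrite !deltaE teqb_sym. Qed.

Lemma delta_l t t' u : tequiv t t' -> delta t u = delta t' u.
Proof. by move=> /teqbP h; rewrite !deltaE (teqb_l _ h). Qed.

Lemma delta_r t u u' : tequiv u u' -> delta t u = delta t u'.
Proof. by move=> /teqbP h; rewrite !deltaE (teqb_r _ h). Qed.

Lemma delta_neq0 t u : delta t u != 0 -> tequiv t u.
Proof. by rewrite deltaE; case: teqbP; rewrite ?eqxx. Qed.

Definition teq_invariant (h : term -> algC) := forall t t', tequiv t t' -> h t = h t'.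

Definition linext (h : term -> algC) (s : sup) : algC := \sum_(p <- flat s) p.1 * h p.2.

Lemma linextT h t : linext h (STerm t) = h t.
Proof. by rewrite /linext /= big_cons big_nil addr0 mul1r. Qed.

Lemma linext0 h : linext h SZero = 0.
Proof. by rewrite /linext /= big_nil. Qed.

Lemma linextZ h a s : linext h (SScale a s) = a * linext h s.
Proof. by rewrite /linext /= big_map mulr_sumr; apply: eq_bigr => p _; rewrite mulrA. Qed.

Lemma linextD h s1 s2 : linext h (SAdd s1 s2) = linext h s1 + linext h s2.
Proof. by rewrite /linext /= big_cat. Qed.

Lemma linext_sum_sups h l : linext h (sum_sups l) = \sum_(p <- l) p.1 * linext h p.2.
Proof.
elim: l => [|p l IH] /=; first by rewrite linext0 big_nil.
by rewrite linextD linextZ IH big_cons.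
Qed.

Lemma linext_sequiv h s s' : teq_invariant h -> sequiv s s' -> linext h s = linext h s'.
Proof.
move=> hh; elim=> {s s'}; intros; rewrite ?linextT ?linextD ?linextZ ?linext0 //; try congruence;
  first [ by rewrite (hh _ _ H) | by rewrite addrC | by rewrite addrA | by rewrite add0r
        | by rewrite mul0r | by rewrite mul1r | by rewrite mulrA | by rewrite mulrDl
        | by rewrite linextD mulrDr ].
Qed.

Lemma delta_invariant u : teq_invariant (delta^~ u).
Proof. by move=> t t' e; apply: delta_l. Qed.

Lemma coefT t u : coef (STerm t) u = delta t u.
Proof. exact: (linextT (delta^~ u)). Qed.

Lemma coef0 u : coef SZero u = 0.
Proof. exact: (linext0 (delta^~ u)). Qed.

Lemma coefZ a s u : coef (SScale a s) u = a * coef s u.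
Proof. exact: (linextZ (delta^~ u)). Qed.

Lemma coefD s1 s2 u : coef (SAdd s1 s2) u = coef s1 u + coef s2 u.
Proof. exact: (linextD (delta^~ u)). Qed.

Lemma coef_sum_sups l u : coef (sum_sups l) u = \sum_(p <- l) p.1 * coef p.2 u.
Proof. exact: (linext_sum_sups (delta^~ u)). Qed.

Lemma coef_sequiv s s' : sequiv s s' -> coef s =1 coef s'.
Proof. by move=> e u; apply: (linext_sequiv (delta_invariant u) e). Qed.

Lemma sum_neq0 (T : Type) (l : seq T) (F : T -> algC) :
  \sum_(x <- l) F x != 0 -> exists2 x, List.In x l & F x != 0.
Proof.
elim: l => [|x l IH]; first by rewrite big_nil eqxx.
rewrite big_cons; have [->|hx] := eqVneq (F x) 0; last by exists x; first left.
by rewrite add0r => /IH [y hy hF]; exists y; first right.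
Qed.

Lemma all_In (T : Type) (P : pred T) l x : all P l -> List.In x l -> P x.
Proof. by elim: l => //= y l IH /andP [h1 h2] [<-|/IH]; auto. Qed.

Definition lcoef (l : seq (algC * term)) (u : term) : algC := \sum_(q <- l) q.1 * delta q.2 u.

Lemma lcoef_neq0 l u : lcoef l u != 0 -> exists2 p, List.In p l & tequiv p.2 u.
Proof.
move/sum_neq0 => [p hp hF]; exists p => //; apply: delta_neq0.
by move: hF; apply: contraNneq => ->; rewrite mulr0.
Qed.

Lemma lcoef_eq0 l u : List.Forall (fun w => ~ tequiv u w) [seq p.2 | p <- l] -> lcoef l u = 0.
Proof.
elim: l => [|p l IH] /=; first by rewrite /lcoef big_nil.
move=> h; inversion h; subst; rewrite /lcoef big_cons -/(lcoef l u) IH // deltaE.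
by case: teqbP => [/teq_sym //|_]; rewrite mulr0 add0r.
Qed.

Lemma coef_sum_terms l u : coef (sum_terms l) u = lcoef l u.
Proof.
elim: l => [|p l IH] /=; first by rewrite coef0 /lcoef big_nil.
by rewrite coefD coefZ coefT IH /lcoef big_cons.
Qed.

Lemma coef_tequiv s u u' : tequiv u u' -> coef s u = coef s u'.
Proof. by move=> h; apply: eq_bigr => p _; rewrite (delta_r _ h). Qed.

Lemma sequiv_scaler0 a : sequiv (SScale a SZero) SZero.
Proof.
seq_via (SScale a (SScale 0 SZero)); first by apply/seq_scale/seq_sym; equiv_auto.
seq_via (SScale (a * 0) SZero); first by equiv_auto.
by rewrite mulr0; equiv_auto.
Qed.

Lemma sequiv_addr0 s : sequiv (SAdd s SZero) s.
Proof. by seq_via (SAdd SZero s); equiv_auto. Qed.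

Lemma sum_terms_cat l1 l2 :
  sequiv (sum_terms (l1 ++ l2)) (SAdd (sum_terms l1) (sum_terms l2)).
Proof.
elim: l1 => /= [|p l IH]; first by apply: seq_sym; equiv_auto.
seq_via (SAdd (SScale p.1 (STerm p.2)) (SAdd (sum_terms l) (sum_terms l2))); first by equiv_auto.
by apply: seq_sym; equiv_auto.
Qed.

Lemma sum_terms_scale a l :
  sequiv (sum_terms [seq (a * p.1, p.2) | p <- l]) (SScale a (sum_terms l)).
Proof.
elim: l => /= [|p l IH]; first exact/seq_sym/sequiv_scaler0.
seq_via (SAdd (SScale a (SScale p.1 (STerm p.2))) (SScale a (sum_terms l))).
  by apply: seq_add => //; apply: seq_sym; equiv_auto.
by apply: seq_sym; equiv_auto.
Qed.

Lemma sum_terms_flat s : sequiv s (sum_terms (flat s)).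
Proof.
elim: s => /= [t||a s IH|s1 IH1 s2 IH2]; apply: seq_sym.
- by seq_via (SScale 1 (STerm t)); [exact: sequiv_addr0 | equiv_auto].
- by equiv_auto.
- by seq_via (SScale a (sum_terms (flat s))); [exact: sum_terms_scale | equiv_auto; apply: seq_sym].
- seq_via (SAdd (sum_terms (flat s1)) (sum_terms (flat s2))); first exact: sum_terms_cat.
  by apply: seq_add; apply: seq_sym.
Qed.

Definition drop_class t (l : seq (algC * term)) := [seq p <- l | ~~ teqb p.2 t].

Lemma sum_terms_split_class l t :
  sequiv (sum_terms l) (SAdd (SScale (lcoef l t) (STerm t)) (sum_terms (drop_class t l))).
Proof.
rewrite /drop_class; elim: l => /= [|[a u] l IH].
  by rewrite /lcoef big_nil; apply: seq_sym; seq_via (SAdd SZero SZero); equiv_auto.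
rewrite /lcoef big_cons -/(lcoef l t) /= deltaE.
set c := lcoef l t; set rest := sum_terms (filter _ l) in IH.
seq_via (SAdd (SScale a (STerm u)) (SAdd (SScale c (STerm t)) rest)); first by equiv_auto.
have [/teqbP e|ne] /= := boolP (teqb u t).
- rewrite mulr1; seq_via (SAdd (SAdd (SScale a (STerm t)) (SScale c (STerm t))) rest).
    apply: seq_sym; seq_via (SAdd (SScale a (STerm t)) (SAdd (SScale c (STerm t)) rest)).
      by equiv_auto.
    by apply: seq_add; equiv_auto; apply: teq_sym.
  by equiv_auto.
- rewrite mulr0 ?addr0 ?add0r; seq_via (SAdd (SAdd (SScale a (STerm u)) (SScale c (STerm t))) rest).
    by apply: seq_sym; equiv_auto.
  seq_via (SAdd (SAdd (SScale c (STerm t)) (SScale a (STerm u))) rest); by equiv_auto.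
Qed.

Lemma lcoef_drop_class l t u :
  lcoef (drop_class t l) u = if teqb u t then 0 else lcoef l u.
Proof.
rewrite /lcoef /drop_class big_filter; have [h|h] := boolP (teqb u t).
  apply: big1 => p hp; rewrite deltaE; case: (boolP (teqb p.2 u)) => [h2|_]; last by rewrite mulr0.
  by rewrite (teqb_trans h2 h) in hp.
rewrite [in RHS](bigID (fun p => ~~ teqb p.2 t)) /= [X in _ = _ + X]big1 ?addr0 //.
move=> p; rewrite negbK deltaE => hp; case: (boolP (teqb p.2 u)) => [h2|_]; last by rewrite mulr0.
by move: h; rewrite (teqb_trans _ hp) // teqb_sym.
Qed.

Lemma size_drop_class t l : (size (drop_class t l) <= size l)%N.
Proof. by rewrite size_filter count_size. Qed.

Lemma sum_terms_lcoef_ext l l' : lcoef l =1 lcoef l' -> sequiv (sum_terms l) (sum_terms l').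
Proof.
move: {2}(size l + size l')%N (leqnn (size l + size l')%N) => m.
elim: m l l' => [|m IH] l l' hs he.
  by case: l hs {he}; case: l' => //= *; equiv_auto.
have by_class t : (size (drop_class t l) + size (drop_class t l') <= m)%N ->
    sequiv (sum_terms l) (sum_terms l').
  move=> hs'; seq_via (SAdd (SScale (lcoef l t) (STerm t)) (sum_terms (drop_class t l))).
    exact: sum_terms_split_class.
  apply: seq_sym; seq_via (SAdd (SScale (lcoef l' t) (STerm t)) (sum_terms (drop_class t l'))).
    exact: sum_terms_split_class.
  rewrite he; apply: seq_add; first by equiv_auto.
  by apply/seq_sym/IH => // u; rewrite !lcoef_drop_class he.
case: l hs he by_class => [|[a t] l] hs he by_class.
  case: l' hs he by_class => [|[a1 t1] l1] hs he by_class; first by equiv_auto.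
  apply: (by_class t1); rewrite /drop_class /= teqb_refl /= -/(drop_class t1 l1) add0n.
  by rewrite add0n ltnS in hs; apply: leq_trans (size_drop_class t1 l1) hs.
apply: (by_class t); rewrite /drop_class /= teqb_refl /= -/(drop_class t l) -/(drop_class t l').
move: hs; rewrite /= addSn ltnS; apply: leq_trans.
exact: leq_add (size_drop_class _ _) (size_drop_class _ _).
Qed.

Lemma eq_coef_sequiv s s' : coef s =1 coef s' -> sequiv s s'.
Proof.
move=> h; apply: seq_trans (sum_terms_flat s) _; apply: seq_sym.
apply: seq_trans (sum_terms_flat s') _; apply: seq_sym.
by apply: sum_terms_lcoef_ext => u; rewrite -!coef_sum_terms -!(coef_sequiv (sum_terms_flat _)).
Qed.

Lemma coef_sbind f s u : coef (sbind f s) u = linext (fun t => coef (f t) u) s.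
Proof.
elim: s => /= [t||a s IH|s1 IH1 s2 IH2]; rewrite ?linextT ?linext0 ?linextZ ?linextD //.
- by rewrite coef0.
- by rewrite coefZ IH.
- by rewrite coefD IH1 IH2.
Qed.

Lemma reduct_coef_invariant u : teq_invariant (fun t => coef (reduct t) u).
Proof. by move=> t t' e; apply/coef_sequiv/reduct_equiv. Qed.

Definition nteqb t u := ~~ teqb t u.

Fixpoint teq_undup (l : seq term) : seq term :=
  if l is t :: l' then
    let r := teq_undup l' in if has (teqb t) r then r else t :: r
  else [::].

Lemma teq_undup_pairwise l : pairwise nteqb (teq_undup l).
Proof.
elim: l => //= t l IH; case: ifP => // h; rewrite pairwise_cons IH andbT.
by change (all (predC (teqb t)) (teq_undup l)); rewrite all_predC h.
Qed.

Lemma teq_undup_cover l u : List.In u l -> has (teqb u) (teq_undup l).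
Proof.
elim: l => //= t l IH [<-|/IH h]; case: ifP => //= _; by rewrite ?teqb_refl ?h ?orbT.
Qed.

Lemma sum_delta_distinct R u g : pairwise nteqb R -> teq_invariant g ->
  \sum_(t <- R) delta u t * g t = if has (teqb u) R then g u else 0.
Proof.
move=> hR hg; elim: R hR => [|t R IH]; first by rewrite big_nil.
rewrite pairwise_cons => /andP [ha hp]; rewrite big_cons IH //= deltaE.
have [h|h] /= := boolP (teqb u t); last by rewrite mul0r add0r.
have -> : has (teqb u) R = false.
  apply/negbTE; rewrite -all_predC; apply: sub_all ha => w /=; rewrite /nteqb.
  by apply: contra => h2; apply: teqb_trans h2; rewrite teqb_sym.
by rewrite mul1r addr0 (hg _ _ (elimT (teqbP _ _) h)).
Qed.

Lemma linext_classes h l R : pairwise nteqb R -> teq_invariant h ->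
  (forall u, List.In u [seq p.2 | p <- l] -> has (teqb u) R) ->
  \sum_(p <- l) p.1 * h p.2 = \sum_(t <- R) lcoef l t * h t.
Proof.
move=> hR hh hcov.
under [RHS]eq_bigr => t _ do rewrite /lcoef big_distrl /=.
rewrite exchange_big /=; elim: l hcov => [|p l IH] hcov; first by rewrite !big_nil.
rewrite !big_cons IH; last by move=> u hu; apply: hcov; right.
congr (_ + _); have := sum_delta_distinct p.2 hR hh; rewrite (hcov p.2 (or_introl erefl)) => <-.
by rewrite mulr_sumr; apply: eq_bigr => t _; rewrite mulrA.
Qed.

Definition support (s : sup) : seq term :=
  [seq t <- teq_undup [seq p.2 | p <- flat s] | coef s t != 0].

Lemma support_pairwise s : pairwise nteqb (support s).
Proof. exact/pairwise_filter/teq_undup_pairwise. Qed.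

Lemma support_coef s : all (fun t => coef s t != 0) (support s).
Proof. exact: filter_all. Qed.

Lemma linext_support h s : teq_invariant h ->
  linext h s = \sum_(t <- support s) coef s t * h t.
Proof.
move=> hh; rewrite /linext (linext_classes (teq_undup_pairwise _) hh (@teq_undup_cover _)).
rewrite big_filter [LHS](bigID (fun t => coef s t != 0)) /= [X in _ + X]big1 ?addr0 //.
by move=> t /negPn /eqP c0; rewrite -coef_sum_terms -(coef_sequiv (sum_terms_flat s)) c0 mul0r.
Qed.

Lemma eq_linext h1 h2 s : teq_invariant h1 -> teq_invariant h2 ->
  (forall t, coef s t != 0 -> h1 t = h2 t) -> linext h1 s = linext h2 s.
Proof.
move=> i1 i2 H; rewrite !linext_support //; apply: eq_bigr => t _.
by have [->|/H ->] := eqVneq (coef s t) 0; rewrite ?mul0r.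
Qed.

(** * Reduction as iteration of a linear map *)

Definition is_value (s : sup) := forall t, coef s t != 0 -> is_basis t.

Definition unstuck (s : sup) := forall t, coef s t != 0 -> is_basis t \/ exists r, tstep t r.

Lemma is_value_equiv s s' : sequiv s s' -> is_value s -> is_value s'.
Proof. by move=> e h t; rewrite -(coef_sequiv e); apply: h. Qed.

Lemma unstuck_equiv s s' : sequiv s s' -> unstuck s -> unstuck s'.
Proof. by move=> e h t; rewrite -(coef_sequiv e); apply: h. Qed.

Lemma is_value_unstuck s : is_value s -> unstuck s.
Proof. by move=> h t /h; left. Qed.

Lemma sreduct_sum_terms l : sreduct (sum_terms l) = sum_sups [seq (p.1, reduct p.2) | p <- l].
Proof. by elim: l => //= p l; rewrite /sreduct /= => ->. Qed.

Lemma sum_sups_STerm l : sum_sups [seq (p.1, STerm p.2) | p <- l] = sum_terms l.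
Proof. by elim: l => //= p l ->. Qed.

Lemma map_Forall (T U : Type) (P : T -> Prop) (f g : T -> U) l :
  List.Forall P l -> (forall x, P x -> f x = g x) -> map f l = map g l.
Proof. by elim=> //= x l' h _ IH H; rewrite H // IH. Qed.

Lemma map_all (T U : Type) (P : pred T) (f g : T -> U) l :
  all P l -> (forall x, P x -> f x = g x) -> map f l = map g l.
Proof. by elim: l => //= x l' IH /andP [hx hl] H; rewrite H // IH. Qed.

Section StepInversion.
Variables (ts : seq (algC * term * sup)) (vs : seq (algC * term)) (S S' : sup).
Hypothesis ts_neq_nil : ts <> [::].
Hypothesis S_def : sequiv S (SAdd (sum_terms [seq (p.1.1, p.1.2) | p <- ts]) (sum_terms vs)).
Hypothesis distinct : List.ForallOrdPairs (fun t u => ~ tequiv t u)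
  ([seq p.1.2 | p <- ts] ++ [seq p.2 | p <- vs]).
Hypothesis coefs_neq0 : all (fun a => a != 0) ([seq p.1.1 | p <- ts] ++ [seq p.1 | p <- vs]).
Hypothesis ts_step : List.Forall (fun p => tstep p.1.2 p.2) ts.
Hypothesis vs_basis : all (fun p => is_basis p.2) vs.
Hypothesis S'_def : sequiv S' (SAdd (sum_sups [seq (p.1.1, p.2) | p <- ts]) (sum_terms vs)).

Lemma step_data_sreduct : sequiv S' (sreduct S).
Proof.
apply: seq_trans S'_def _; apply: seq_sym; apply: seq_trans (sreduct_equiv S_def) _.
rewrite /sreduct /= -!/(sreduct _) !sreduct_sum_terms -sum_sups_STerm -!map_comp.
apply: seq_add.
  rewrite (map_Forall (g := fun p => (p.1.1, p.2)) ts_step) => [|p /= /reduct_step -> //].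
  by equiv_auto.
rewrite (map_all (g := fun p => (p.1, STerm p.2)) vs_basis) => [|p /= /reduct_basis -> //].
by equiv_auto.
Qed.

Lemma step_data_unstuck : unstuck S.
Proof.
move=> t; rewrite (coef_sequiv S_def) coefD !coef_sum_terms.
set redexes := [seq (p.1.1, p.1.2) | p <- ts].
have [->|] := eqVneq (lcoef redexes t) 0.
  rewrite add0r => /lcoef_neq0 [p hp e]; left.
  by rewrite -(tequiv_basis e); exact: (all_In vs_basis hp).
move=> /lcoef_neq0 [p /List.in_map_iff [q [<- hq]] e] _; right.
have [r hr _] := tstep_tequiv (proj1 (List.Forall_forall _ _) ts_step _ hq) e.
by exists r.
Qed.

(* The first redex keeps its nonzero weight in [S], by distinctness. *)
Lemma step_data_not_value : ~ is_value S.
Proof.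
case: ts ts_neq_nil S_def distinct coefs_neq0 ts_step => // q0 ts' _ hS hd hnz hst.
inversion hd as [|a l hF _]; inversion hst as [|a' l' hs0 _]; subst.
move: hnz => /= /andP [hq0 _] hval.
have hc : coef S q0.1.2 = q0.1.1.
  rewrite (coef_sequiv hS) coefD !coef_sum_terms /= /lcoef big_cons -!/(lcoef _ _) /=.
  move/List.Forall_app: hF => [hF1 hF2].
  by rewrite delta_refl mulr1 !lcoef_eq0 ?addr0 // -map_comp.
by have := hval q0.1.2; rewrite hc (tstep_not_basis hs0) => /(_ hq0).
Qed.

End StepInversion.

Lemma step_inv S S' : step S S' -> [/\ sequiv S' (sreduct S), unstuck S & ~ is_value S].
Proof.
case=> ts vs {}S {}S' hne hS hd hnz hts hvs hS'; split.
- exact: step_data_sreduct hS hts hvs hS'.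
- exact: step_data_unstuck hS hts hvs.
- exact: step_data_not_value hne hS hd hnz hts.
Qed.

Lemma In_filter (T : Type) (P : pred T) l x : List.In x (filter P l) -> P x /\ List.In x l.
Proof.
elim: l => //= y l IH; case: ifP => hy /=; last by move/IH => [? ?]; split; last right.
by case=> [<-|/IH [? ?]]; split=> //; [left | right].
Qed.

Lemma In_filter_intro (T : Type) (P : pred T) l x : P x -> List.In x l -> List.In x (filter P l).
Proof.
move=> hx; elim: l => //= y l IH [->|h]; first by rewrite hx; left.
by case: (P y) => /=; [right|]; apply: IH.
Qed.

Lemma allrel_filter_disjoint (T : Type) (r : rel T) (P Q : pred T) l :
  symmetric r -> (forall x, P x -> ~~ Q x) -> pairwise r l ->
  allrel r (filter P l) (filter Q l).
Proof.
move=> hs hPQ; elim: l => // x l IH; rewrite pairwise_cons => /andP [ha /IH {}IH] /=.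
have sub (R : pred T) : all (r x) (filter R l).
  by rewrite all_filter; apply: sub_all ha => y /= h; rewrite h implybT.
case: ifP => hP; first by rewrite (negbTE (hPQ _ hP)) allrel_consl sub IH.
case: ifP => hQ //; rewrite allrel_consr IH andbT.
by rewrite all_filter; apply: sub_all ha => y /=; rewrite hs => ->; rewrite implybT.
Qed.

Lemma pairwise_ForallOrdPairs l : pairwise nteqb l ->
  List.ForallOrdPairs (fun t u => ~ tequiv t u) l.
Proof.
elim: l => [|x l IH]; first by constructor.
rewrite pairwise_cons => /andP [ha hp]; constructor; last exact: IH.
elim: l ha {IH hp} => [|y l IH] /=; first by constructor.
by move=> /andP [h1 h2]; constructor; [move=> /teqbP; apply/negP | apply: IH].
Qed.

Lemma coef_support s u : coef s u = \sum_(t <- support s) coef s t * delta t u.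
Proof. exact: (linext_support _ (delta_invariant u)). Qed.

Section StepConstruction.
Variable S : sup.
Hypotheses (S_unstuck : unstuck S) (S_not_value : ~ is_value S).

Let redexes := [seq t <- support S | ~~ is_basis t].
Let values := [seq t <- support S | is_basis t].
Let ts := [seq (coef S t, t, reduct t) | t <- redexes].
Let vs := [seq (coef S t, t) | t <- values].

Lemma sum_support_split (F : term -> algC) :
  \sum_(t <- support S) F t = \sum_(t <- redexes) F t + \sum_(t <- values) F t.
Proof.
rewrite (bigID (fun t => ~~ is_basis t)) /= /redexes /values !big_filter.
by congr (_ + _); apply: eq_bigl => t; rewrite negbK.
Qed.

Lemma redexes_neq_nil : ts <> [::].
Proof.
have [t ht hnb] : exists2 t, coef S t != 0 & ~~ is_basis t.
  apply: NNPP => hn; apply: S_not_value => t ht; apply: negbNE; apply/negP => hb.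
  by apply: hn; exists t.
move: ht; rewrite coef_support => /sum_neq0 [t1 h1].
rewrite mulf_eq0 negb_or => /andP [_ /delta_neq0 e].
have : List.In t1 redexes by apply: In_filter_intro => //; rewrite (tequiv_basis e).
by rewrite /ts; case: redexes.
Qed.

Lemma sreduct_step_data : [/\
  sequiv S (SAdd (sum_terms [seq (p.1.1, p.1.2) | p <- ts]) (sum_terms vs)),
  List.ForallOrdPairs (fun t u => ~ tequiv t u) ([seq p.1.2 | p <- ts] ++ [seq p.2 | p <- vs]),
  all (fun a => a != 0) ([seq p.1.1 | p <- ts] ++ [seq p.1 | p <- vs]),
  List.Forall (fun p => tstep p.1.2 p.2) ts &
  all (fun p => is_basis p.2) vs].
Proof.
rewrite /ts /vs -!map_comp /comp /=; split.
- apply: eq_coef_sequiv => u; rewrite coefD !coef_sum_terms /lcoef !big_map /=.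
  by rewrite coef_support sum_support_split.
- rewrite !map_id; apply: pairwise_ForallOrdPairs.
  have hsup := support_pairwise S.
  rewrite pairwise_cat; apply/and3P; split; try exact: pairwise_filter.
  apply: allrel_filter_disjoint hsup => [a b|t /negbTE ->] //.
  by rewrite /nteqb teqb_sym.
- have nz_filter (P : pred term) : all (fun t => coef S t != 0) (filter P (support S)).
    by rewrite all_filter; apply: sub_all (support_coef S) => t /= h; rewrite h implybT.
  by rewrite all_cat !all_map; apply/andP; split; apply: nz_filter.
- apply/List.Forall_forall => p /List.in_map_iff [t [<- hred]] /=.
  have [hnb ht] := In_filter hred.
  have := S_unstuck (all_In (support_coef S) ht).
  by case=> [hb|[r hr]]; [rewrite hb in hnb | rewrite (reduct_step hr)].
- by rewrite all_map; apply: filter_all.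
Qed.

Lemma sreduct_step_result :
  sequiv (sreduct S) (SAdd (sum_sups [seq (p.1.1, p.2) | p <- ts]) (sum_terms vs)).
Proof.
apply: eq_coef_sequiv => u; rewrite coefD coef_sum_sups coef_sum_terms /lcoef.
rewrite /sreduct coef_sbind (linext_support _ (reduct_coef_invariant u)).
rewrite /ts /vs -!map_comp !big_map sum_support_split /=; congr (_ + _).
rewrite /values [LHS]big_filter [RHS]big_filter.
by apply: eq_bigr => t hb; rewrite reduct_basis ?coefT.
Qed.

End StepConstruction.

Lemma sreduct_step S : unstuck S -> ~ is_value S -> step S (sreduct S).
Proof.
move=> hu hv; have [hS hd hnz hts hvs] := sreduct_step_data hu.
exact: Step (redexes_neq_nil hv) hS hd hnz hts hvs (sreduct_step_result S).
Qed.

Lemma sreduct_value s : is_value s -> sequiv (sreduct s) s.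
Proof.
move=> hv; apply: eq_coef_sequiv => u; rewrite /sreduct coef_sbind.
rewrite (eq_linext (reduct_coef_invariant u) (delta_invariant u)) //.
by move=> t /hv hb; rewrite reduct_basis // coefT.
Qed.

Lemma iter_sreduct_equiv m s s' : sequiv s s' -> sequiv (iter m sreduct s) (iter m sreduct s').
Proof. by move=> e; elim: m => //= m IH; apply: sreduct_equiv. Qed.

Lemma sreduct_sum_sups l : sreduct (sum_sups l) = sum_sups [seq (p.1, sreduct p.2) | p <- l].
Proof. by rewrite /sreduct; elim: l => //= p l ->. Qed.

Lemma iter_sreduct_sum_sups m l :
  iter m sreduct (sum_sups l) = sum_sups [seq (p.1, iter m sreduct p.2) | p <- l].
Proof.
elim: m => [|m IH]; first by elim: l => //= p l <-; case: p.
by rewrite iterS IH sreduct_sum_sups -map_comp.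
Qed.

(* Reduction from [T] reaches the value [iter m sreduct T]. *)
Definition evaluates_in (m : nat) (T : sup) :=
  (forall j, (j < m)%N -> unstuck (iter j sreduct T)) /\ is_value (iter m sreduct T).

Lemma evaluates_in_equiv m T T' : sequiv T T' -> evaluates_in m T -> evaluates_in m T'.
Proof.
move=> e [h1 h2]; split; last exact: is_value_equiv (iter_sreduct_equiv m e) h2.
by move=> j hj; apply: unstuck_equiv (iter_sreduct_equiv j e) (h1 j hj).
Qed.

Lemma evaluates_in_stable m M T : evaluates_in m T -> (m <= M)%N ->
  sequiv (iter M sreduct T) (iter m sreduct T).
Proof.
move=> [_ hv]; elim: M => [|M IH]; first by rewrite leqn0 => /eqP ->; equiv_auto.
rewrite leq_eqVlt => /orP [/eqP <-|/IH e]; first by equiv_auto.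
by rewrite iterS; apply: seq_trans (sreduct_equiv e) (sreduct_value hv).
Qed.

Lemma evaluates_in_mono m M T : evaluates_in m T -> (m <= M)%N -> evaluates_in M T.
Proof.
move=> H hm; have [h1 h2] := H.
split=> [j hj|]; last exact: is_value_equiv (seq_sym (evaluates_in_stable H hm)) h2.
have [/h1 //|hjm] := ltnP j m.
exact/is_value_unstuck/(is_value_equiv (seq_sym (evaluates_in_stable H hjm)) h2).
Qed.

Lemma evaluates_in_unique m m' T : evaluates_in m T -> evaluates_in m' T ->
  sequiv (iter m sreduct T) (iter m' sreduct T).
Proof.
move=> H H'; apply: seq_trans (seq_sym (evaluates_in_stable H (leq_maxl m m'))) _.
exact: evaluates_in_stable H' (leq_maxr m m').
Qed.

Lemma evaluates_in_reduces m T : evaluates_in m T -> reduces_to T (iter m sreduct T).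
Proof.
elim: m T => [|m IH] T [h1 h2]; first by exists T; split; [constructor | equiv_auto].
have [hv|hv] := classic (is_value T).
  exists T; split; first constructor.
  by apply: seq_sym; apply: (@evaluates_in_stable 0).
have H' : evaluates_in m (sreduct T).
  by split=> [j hj|]; rewrite -iterSr; [apply: h1 | ].
have [s' [hm he]] := IH _ H'; exists s'; split; last by rewrite iterSr.
exact: ms_step (sreduct_step (h1 0%N isT) hv) hm.
Qed.

Lemma msteps_evaluates_in T T' : msteps T T' -> is_value T' ->
  exists m, evaluates_in m T /\ sequiv T' (iter m sreduct T).
Proof.
elim=> {T T'} [s hv|s1 s2 s3 hst _ IH hv]; first by exists 0%N; split; [split | equiv_auto].
have [m [[h1 h2] e]] := IH hv; have [e2 hu _] := step_inv hst.
exists m.+1; rewrite iterSr; split; last exact: seq_trans e (iter_sreduct_equiv m e2).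
split=> [[|j] hj|]; rewrite ?iterSr.
- exact: hu.
- exact: unstuck_equiv (iter_sreduct_equiv j e2) (h1 j hj).
- exact: is_value_equiv (iter_sreduct_equiv m e2) h2.
Qed.

Lemma reduces_to_evaluates_in T W : reduces_to T W -> is_value W ->
  exists m, evaluates_in m T /\ sequiv W (iter m sreduct T).
Proof.
move=> [s' [hm he]] hv.
have [m [hE e]] := msteps_evaluates_in hm (is_value_equiv (seq_sym he) hv).
by exists m; split=> //; apply: seq_trans (seq_sym he) e.
Qed.

Lemma is_value_sum_sups l : List.Forall (fun p => is_value p.2) l -> is_value (sum_sups l).
Proof.
elim=> [|p l1 hp _ IH] t /=; first by rewrite coef0 eqxx.
by rewrite coefD coefZ; have [->|/hp //] := eqVneq (coef p.2 t) 0; rewrite mulr0 add0r => /IH.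
Qed.

Lemma unstuck_sum_sups l : List.Forall (fun p => unstuck p.2) l -> unstuck (sum_sups l).
Proof.
elim=> [|p l1 hp _ IH] t /=; first by rewrite coef0 eqxx.
by rewrite coefD coefZ; have [->|/hp //] := eqVneq (coef p.2 t) 0; rewrite mulr0 add0r => /IH.
Qed.

Lemma evaluates_in_sum_sups m l : List.Forall (fun p => evaluates_in m p.2) l ->
  evaluates_in m (sum_sups l).
Proof.
move=> H; split=> [j hj|]; rewrite iter_sreduct_sum_sups.
- by apply: unstuck_sum_sups; elim: H => //= p l' [hp _] _ IH; constructor => //; apply: hp.
- by apply: is_value_sum_sups; elim: H => //= p l' [_ hp] _ IH; constructor.
Qed.

(** * Qubit registers *)

Section Qubits.
Local Open Scope nat_scope.

Lemma bitket_basis b : is_basis (bitket b).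
Proof. by rewrite /bitket; case: (b == 0). Qed.

Lemma bitket_closed b : tclosed [::] (bitket b).
Proof. by rewrite /bitket; case: (b == 0). Qed.

Lemma bitket_inj a b : a < 2 -> b < 2 -> tequiv (bitket a) (bitket b) -> a = b.
Proof.
rewrite /bitket; case: a => [|[|a]] //; case: b => [|[|b]] // _ _.
- by move/tequiv_Ket0.
- by move/tequiv_Ket1.
Qed.

Lemma ketS m i : 0 < m -> ket m.+1 i = Pair (bitket (i %/ 2 ^ m)) (ket m (i %% 2 ^ m)).
Proof. by case: m. Qed.

Lemma ket_basis_closed n i : is_basis (ket n i) && tclosed [::] (ket n i).
Proof.
elim: n i => [|m IH] i //; case: m IH => [|m] IH; first by rewrite /= bitket_basis bitket_closed.
by rewrite ketS //=; have /andP [-> ->] := IH (i %% 2 ^ m.+1); rewrite bitket_basis bitket_closed.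
Qed.

Lemma ket_basis n i : is_basis (ket n i).
Proof. by have /andP [] := ket_basis_closed n i. Qed.

Lemma exp2_gt0 e : 0 < 2 ^ e.
Proof. by rewrite expn_gt0. Qed.

Lemma div_pow2_lt2 m x : x < 2 ^ m.+1 -> x %/ 2 ^ m < 2.
Proof. by move=> hx; rewrite ltn_divLR ?expn_gt0 // -expnS. Qed.

Lemma ket_inj n i j : 1 <= n -> i < 2 ^ n -> j < 2 ^ n ->
  tequiv (ket n i) (ket n j) -> i = j.
Proof.
elim: n i j => [|m IH] i j // _; case: m IH => [|m] IH hi hj; first exact: bitket_inj.
rewrite [ket m.+2 i]ketS // [ket m.+2 j]ketS // => /tequiv_Pair [a [c [[<- <-] h1 h2]]].
have e1 := bitket_inj (div_pow2_lt2 hi) (div_pow2_lt2 hj) h1.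
have e2 := IH _ _ isT (ltn_pmod _ (exp2_gt0 _)) (ltn_pmod _ (exp2_gt0 _)) h2.
by rewrite (divn_eq i (2 ^ m.+1)) (divn_eq j (2 ^ m.+1)) e1 e2.
Qed.

Lemma sem_Bool s : sem TBool env0 s <-> exists2 b, b < 2 & s = STerm (bitket b).
Proof.
split=> [[->|->]|[b hb ->]]; [by exists 0 | by exists 1 |].
by rewrite /bitket; case: b hb => [|[|]] //= _; [left | right].
Qed.

Lemma sem_Bn n s : 1 <= n ->
  sem (Bn n) env0 s <-> exists2 i, i < 2 ^ n & s = STerm (ket n i).
Proof.
elim: n s => [|m IH] s // _; case: m IH => [|m] IH; first exact: sem_Bool.
rewrite (_ : Bn m.+2 = TProd TBool (Bn m.+1)) //; split.
- move=> [v [w [/sem_Bool [b hb ->] [/(IH w isT) [j hj ->] ->]]]].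
  exists (b * 2 ^ m.+1 + j).
    by rewrite [2 ^ m.+2]expnS; move: (2 ^ m.+1) hj => e hj; case: b hb => [|[|]] // _; lia.
  by rewrite [ket m.+2 _]ketS // divnMDl ?expn_gt0 // modnMDl divn_small // modn_small // addn0.
- move=> [i hi ->]; rewrite ketS //.
  exists (STerm (bitket (i %/ 2 ^ m.+1))), (STerm (ket m.+1 (i %% 2 ^ m.+1))).
  split; first by apply/sem_Bool; exists (i %/ 2 ^ m.+1); first exact: div_pow2_lt2.
  split=> //; apply/(IH _ isT); exists (i %% 2 ^ m.+1) => //; exact: ltn_pmod (exp2_gt0 _).
Qed.

End Qubits.

Section KetBasis.
Variable n : nat.
Hypothesis n_gt0 : (1 <= n)%N.
Notation I := 'I_(2 ^ n).

Definition qket (i : I) : term := ket n i.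

Lemma delta_qket (i j : I) : delta (qket i) (qket j) = (i == j)%:R.
Proof.
rewrite deltaE; case: teqbP => [/(ket_inj n_gt0 (ltn_ord i) (ltn_ord j)) /val_inj ->|ne].
  by rewrite eqxx.
by case: eqP => // eij; case: ne; rewrite eij; apply: teq_refl.
Qed.

Lemma sem_qket (i : I) : sem (Bn n) env0 (STerm (qket i)).
Proof. by apply/(sem_Bn _ n_gt0); exists i. Qed.

Definition ket_sum (f : I -> algC) : sup :=
  sum_sups [seq (f i, STerm (qket i)) | i <- index_enum I].

Lemma linext_ket_sum h f : linext h (ket_sum f) = \sum_(i : I) f i * h (qket i).
Proof. by rewrite linext_sum_sups big_map; apply: eq_bigr => i _; rewrite linextT. Qed.

Lemma coef_ket_sum f u : coef (ket_sum f) u = \sum_(i : I) f i * delta (qket i) u.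
Proof. exact: (linext_ket_sum (delta^~ u) f). Qed.

Lemma coef_ket_sum_qket f j : coef (ket_sum f) (qket j) = f j.
Proof.
rewrite coef_ket_sum (bigD1 j) //= delta_qket eqxx mulr1 big1 ?addr0 // => i /negbTE hi.
by rewrite delta_qket hi mulr0.
Qed.

Lemma ket_sum_value f : svalue (ket_sum f) && sclosed [::] (ket_sum f).
Proof.
rewrite /ket_sum; elim: (index_enum _) => //= i l /andP [h1 h2].
by have /andP [k1 k2] := ket_basis_closed n i; rewrite /qket k1 k2 h1 h2.
Qed.

Definition ket_supported (X : sup) := forall u, coef X u != 0 -> exists j : I, tequiv u (qket j).

Lemma ket_supported_ket_sum f : ket_supported (ket_sum f).
Proof.
move=> u; rewrite coef_ket_sum => /sum_neq0 [i _]; rewrite mulf_eq0 negb_or.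
by move=> /andP [_ /delta_neq0 /teq_sym e]; exists i.
Qed.

Lemma ket_supported_is_value X : ket_supported X -> is_value X.
Proof. by move=> hX u /hX [j e]; rewrite (tequiv_basis e) ket_basis. Qed.

Lemma ket_supported_decomp X : ket_supported X -> sequiv X (ket_sum (fun i => coef X (qket i))).
Proof.
move=> hX; apply: eq_coef_sequiv => u; rewrite coef_ket_sum.
have [[j e]|ne] := classic (exists j : I, tequiv u (qket j)).
  rewrite (coef_tequiv _ e) (bigD1 j) //= (delta_r _ e) delta_refl mulr1 big1 ?addr0 // => i hi.
  by rewrite (delta_r _ e) delta_qket (negbTE hi) mulr0.
rewrite big1 => [|i _].
  by apply/eqP; apply: contraT => /hX.
rewrite deltaE; case: teqbP => [e|]; last by rewrite mulr0.
by case: ne; exists i; apply: teq_sym.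
Qed.

Lemma sharp_ket_supported v : sem (TSharp (Bn n)) env0 v -> ket_supported v.
Proof.
move=> [[l [hl e]] _] u; rewrite (coef_sequiv e) coef_sum_sups => /sum_neq0 [p hp].
have /(sem_Bn _ n_gt0) [i hi ->] := proj1 (List.Forall_forall _ _) hl _ hp.
by rewrite coefT mulf_eq0 negb_or => /andP [_ /delta_neq0 /teq_sym eu]; exists (Ordinal hi).
Qed.

Lemma floorvE v (i : I) : floorv n v i 0 = coef v (qket i).
Proof. by rewrite mxE. Qed.

Lemma floorv_equiv X Y : sequiv X Y -> floorv n X = floorv n Y.
Proof. by move=> e; apply/matrixP => i j; rewrite !mxE (coef_sequiv e). Qed.

Lemma floorv_inj X Y : ket_supported X -> ket_supported Y ->
  floorv n X = floorv n Y -> sequiv X Y.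
Proof.
move=> /ket_supported_decomp eX /ket_supported_decomp eY hf.
apply: seq_trans eX (seq_trans _ (seq_sym eY)); apply: eq_coef_sequiv => u.
by rewrite !coef_ket_sum; apply: eq_bigr => i _; rewrite -!floorvE hf.
Qed.

Lemma ip_cdot X Y : ket_supported X -> ip X Y = cdot (floorv n X) (floorv n Y).
Proof.
move=> hX; have -> : ip X Y = (linext (fun t => (coef Y t)^*) X)^*.
  rewrite /ip /linext rmorph_sum; apply: eq_bigr => p _.
  rewrite rmorphM /= conjCK /coef mulr_sumr; apply: eq_bigr => q _.
  by rewrite mulrA delta_sym.
have hinv : teq_invariant (fun t => (coef Y t)^*) by move=> t t' e; rewrite (coef_tequiv _ e).
rewrite (linext_sequiv hinv (ket_supported_decomp hX)) linext_ket_sum rmorph_sum.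
by apply: eq_bigr => i _; rewrite rmorphM /= conjCK !floorvE.
Qed.

Lemma floorv_ket_sum (c : 'cV[algC]_(2 ^ n)) : floorv n (ket_sum (fun i => c i 0)) = c.
Proof. by apply/matrixP => r j; rewrite ord1 floorvE coef_ket_sum_qket. Qed.

Lemma sem_ket_sum (c : 'cV[algC]_(2 ^ n)) : cdot c c = 1 ->
  sem (TSharp (Bn n)) env0 (ket_sum (fun i => c i 0)).
Proof.
move=> hc; split.
  exists [seq (c i 0, STerm (qket i)) | i <- index_enum I]; split; last by equiv_auto.
  by apply/List.Forall_forall => p /List.in_map_iff [i [<- _]]; apply: sem_qket.
split; first by exists (ket_sum (fun i => c i 0)); split; [equiv_auto | apply: ket_sum_value].
by rewrite ip_cdot ?floorv_ket_sum ?hc ?normr1 ?expr1n //; apply: ket_supported_ket_sum.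
Qed.

Lemma sharp_unit_norm w : sem (TSharp (Bn n)) env0 w -> cdot (floorv n w) (floorv n w) = 1.
Proof.
move=> hw; have [_ [_]] := hw; rewrite ip_cdot; last exact: sharp_ket_supported.
have h0 : 0 <= cdot (floorv n w) (floorv n w).
  by apply: sumr_ge0 => i _; rewrite mulrC; apply: mul_conjC_ge0.
rewrite ger0_norm // => /eqP; rewrite sqrf_eq1 => /orP [/eqP //|/eqP h].
by move: h0; rewrite h oppr_ge0 ler10.
Qed.

End KetBasis.

(** * Unit-norm preserving matrices *)

Section Cdot.
Variable q : nat.
Implicit Types u v w : 'cV[algC]_q.

Lemma cdotDl u v w : cdot (u + v) w = cdot u w + cdot v w.
Proof. by rewrite /cdot -big_split; apply: eq_bigr => i _; rewrite mxE rmorphD mulrDl. Qed.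

Lemma cdotDr u v w : cdot w (u + v) = cdot w u + cdot w v.
Proof. by rewrite /cdot -big_split; apply: eq_bigr => i _; rewrite mxE mulrDr. Qed.

Lemma cdotZl a u w : cdot (a *: u) w = a^* * cdot u w.
Proof. by rewrite /cdot mulr_sumr; apply: eq_bigr => i _; rewrite mxE rmorphM mulrA. Qed.

Lemma cdotZr a u w : cdot w (a *: u) = a * cdot w u.
Proof. by rewrite /cdot mulr_sumr; apply: eq_bigr => i _; rewrite mxE mulrCA. Qed.

Lemma cdot_delta (i j : 'I_q) : cdot (delta_mx i 0) (delta_mx j 0) = (i == j)%:R.
Proof.
rewrite /cdot (bigD1 i) //= big1 ?addr0 => [|r /negbTE h]; last by rewrite !mxE h rmorph0 mul0r.
by rewrite !mxE !eqxx rmorph1 mul1r; case: (i == j).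
Qed.

Lemma cdot_expand p (B : 'M[algC]_(p, q)) u v :
  cdot (B *m u) (B *m v) =
  \sum_i \sum_j (u i 0)^* * v j 0 * cdot (B *m delta_mx i 0) (B *m delta_mx j 0).
Proof.
have decomp w : w = \sum_i w i 0 *: delta_mx i 0.
  by rewrite {1}(matrix_sum_delta w); apply: eq_bigr => i _; rewrite big_ord1.
rewrite {1}(decomp u) {1}(decomp v) !mulmx_sumr /cdot.
under eq_bigr => r _ do rewrite !summxE rmorph_sum mulr_suml.
rewrite exchange_big; apply: eq_bigr => i _.
under eq_bigr => r _ do rewrite mulr_sumr.
rewrite exchange_big; apply: eq_bigr => j _.
by rewrite mulr_sumr; apply: eq_bigr => r _; rewrite -!scalemxAr !mxE rmorphM; ring.
Qed.

End Cdot.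

Section UnitNormPreserving.
Variables p q : nat.
Variable A : 'M[algC]_(p, q).
Hypothesis A_unit : forall c : 'cV[algC]_q, cdot c c = 1 -> cdot (A *m c) (A *m c) = 1.

Let gram (i j : 'I_q) := cdot (A *m delta_mx i 0) (A *m delta_mx j 0).

Lemma unit_preserving_norm2 d : cdot d d = 2 -> cdot (A *m d) (A *m d) = 2.
Proof.
move=> hd; set s := (sqrtC (2 : algC))^-1.
have s_real : s^* = s by apply/conj_Creal/ger0_real; rewrite invr_ge0 sqrtC_ge0 ler0n.
have ss : s * s = 2^-1 by rewrite -expr2 exprVn sqrtCK.
have two_neq0 : (2 : algC) != 0 by rewrite pnatr_eq0.
have := A_unit (c := s *: d).
rewrite -scalemxAr !cdotZl !cdotZr s_real hd !mulrA ss mulVf // => /(_ erefl) h.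
by apply: (mulfI (invr_neq0 two_neq0)); rewrite h mulVf.
Qed.

(* Polarization: the norms of [e_i + e_j] and [e_i + 'i e_j] determine the
   real and imaginary parts of [gram i j]. *)
Lemma gram_delta i j : gram i j = (i == j)%:R.
Proof.
have diag k : gram k k = 1 by apply/A_unit; rewrite cdot_delta eqxx.
have [<-|hij] := eqVneq i j; first exact: diag.
have hji : (j == i) = false by rewrite eq_sym (negbTE hij).
have polar a : a^* * a = 1 -> a * gram i j + a^* * gram j i = 0.
  move=> ha; pose d : 'cV[algC]_q := delta_mx i 0 + a *: delta_mx j 0.
  have hd : cdot d d = 2.
    rewrite /d !(cdotDl, cdotDr, cdotZl, cdotZr) !cdot_delta !eqxx (negbTE hij) hji /=.
    by rewrite !mulr0 mulr1 ha addr0 add0r.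
  have := unit_preserving_norm2 hd.
  rewrite /d mulmxDr -scalemxAr !(cdotDl, cdotDr, cdotZl, cdotZr) -!/(gram _ _) !diag.
  by rewrite mulr1 ha => h; apply: (addrI 2); rewrite addr0 -[in RHS]h; ring.
have h1 : gram i j + gram j i = 0.
  by have := polar 1; rewrite conjC1 !mul1r; apply.
have h2 : 'i * gram i j - 'i * gram j i = 0.
  by have := polar 'i; rewrite conjCi !mulNr mulCii opprK; apply.
have gji : gram j i = - gram i j by apply/eqP; rewrite -addr_eq0 addrC h1.
move: h2; rewrite gji mulrN opprK -mulr2n => /eqP; rewrite mulrn_eq0 /= mulf_eq0.
by rewrite (negbTE (@neq0Ci _)) => /eqP.
Qed.

Lemma unit_preserving_isometry u v : cdot (A *m u) (A *m v) = cdot u v.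
Proof.
rewrite cdot_expand -[in RHS](mul1mx u) -[in RHS](mul1mx v) cdot_expand.
by apply: eq_bigr => i _; apply: eq_bigr => j _; rewrite !mul1mx cdot_delta -/(gram _ _) gram_delta.
Qed.

Lemma unit_preserving_dim_le : (q <= p)%N.
Proof.
set B := (map_mx (fun x : algC => x^*) A)^T.
have BA1 : B *m A = 1%:M.
  apply/matrixP => i j; rewrite !mxE -gram_delta /gram /cdot; apply: eq_bigr => r _.
  by rewrite /B -!colE !mxE.
by have := mxrankM_maxl B A; rewrite BA1 mxrank1 => /leq_trans; apply; apply: rank_leq_col.
Qed.

End UnitNormPreserving.

(** * Realizers of #B^n -o #B^k *)

Section Realizer.
Variables (n k : nat) (lam : term).
Hypotheses (n_gt0 : (1 <= n)%N) (k_gt0 : (1 <= k)%N).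
Hypothesis lam_realizes : forall v, sem (TSharp (Bn n)) env0 v ->
  realizes (app_sup lam v) (sem (TSharp (Bn k)) env0).
Notation I := 'I_(2 ^ n).

Lemma app_ket_sum f : app_sup lam (ket_sum f) =
  sum_sups [seq (f i, STerm (App lam (qket i))) | i <- index_enum I].
Proof. by rewrite /app_sup /slift /ket_sum; elim: (index_enum I) => //= i l ->. Qed.

Lemma reduces_to_sharp_evaluates_in T w : sem (TSharp (Bn k)) env0 w -> reduces_to T w ->
  exists m, evaluates_in m T /\ sequiv w (iter m sreduct T).
Proof.
move=> hw /reduces_to_evaluates_in; apply.
exact/ket_supported_is_value/(sharp_ket_supported k_gt0).
Qed.

Lemma basis_evaluates (i : I) : exists m, evaluates_in m (STerm (App lam (qket i))).
Proof.
pose e : 'cV[algC]_(2 ^ n) := delta_mx i 0.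
have e_i : sequiv (ket_sum (fun j => e j 0)) (STerm (qket i)).
  apply: eq_coef_sequiv => u; rewrite coef_ket_sum coefT (bigD1 i) //= !mxE !eqxx mul1r.
  by rewrite big1 ?addr0 // => j /negbTE hj; rewrite !mxE hj mul0r.
have e_unit : cdot e e = 1 by rewrite cdot_delta eqxx.
have [w [hr hw]] := lam_realizes (sem_ket_sum n_gt0 e_unit).
have [m [hm _]] := reduces_to_sharp_evaluates_in hw hr.
by exists m; apply: evaluates_in_equiv _ hm; exact: (app_sup_equiv lam e_i).
Qed.

Lemma uniform_evaluation_bound : exists M, forall i : I, evaluates_in M (STerm (App lam (qket i))).
Proof.
have [m hm] := fin_all_exists basis_evaluates.
by exists (\max_i m i)%N => i; apply: evaluates_in_mono (hm i) (leq_bigmax i).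
Qed.

Section Output.
Variable M : nat.
Hypothesis M_bound : forall i : I, evaluates_in M (STerm (App lam (qket i))).

Let out (i : I) := iter M sreduct (STerm (App lam (qket i))).

Definition realizer_mx : 'M[algC]_(2 ^ k, 2 ^ n) := \matrix_(r, i) coef (out i) (qket r).

Definition output_sum (c : 'cV[algC]_(2 ^ n)) := sum_sups [seq (c i 0, out i) | i <- index_enum I].

Lemma floorv_output_sum c : floorv k (output_sum c) = realizer_mx *m c.
Proof.
apply/matrixP => r j; rewrite ord1 !mxE coef_sum_sups big_map.
by apply: eq_bigr => i _; rewrite !mxE mulrC.
Qed.

Lemma app_evaluates v : sem (TSharp (Bn n)) env0 v ->
  evaluates_in M (app_sup lam v) /\
  sequiv (iter M sreduct (app_sup lam v)) (output_sum (floorv n v)).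
Proof.
move=> /(sharp_ket_supported n_gt0) /(ket_supported_decomp n_gt0) /(app_sup_equiv lam) e.
split; first apply: evaluates_in_equiv (seq_sym e) _.
  rewrite app_ket_sum; apply: evaluates_in_sum_sups.
  by apply/List.Forall_forall => p /List.in_map_iff [i [<- _]]; apply: M_bound.
apply: seq_trans (iter_sreduct_equiv M e) _.
rewrite app_ket_sum iter_sreduct_sum_sups -map_comp /output_sum.
by under [in X in sequiv _ X]eq_map => i do rewrite floorvE; apply: seq_refl.
Qed.

Lemma output_sum_unique v w : sem (TSharp (Bn n)) env0 v -> sem (TSharp (Bn k)) env0 w ->
  reduces_to (app_sup lam v) w -> sequiv w (output_sum (floorv n v)).
Proof.
move=> hv hw /(reduces_to_sharp_evaluates_in hw) [m [hm e]]; have [hM eM] := app_evaluates hv.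
by apply: seq_trans e _; apply: seq_trans (evaluates_in_unique hm hM) eM.
Qed.

Lemma realizer_output v : sem (TSharp (Bn n)) env0 v ->
  exists2 w, sem (TSharp (Bn k)) env0 w & sequiv w (output_sum (floorv n v)).
Proof.
by move=> hv; have [w [hr hw]] := lam_realizes hv; exists w => //; apply: output_sum_unique.
Qed.

Lemma represents_realizer_mx : represents n k lam (mulmx realizer_mx).
Proof.
move=> v w hv hw; split=> [hr|hA].
  by rewrite -floorv_output_sum -(floorv_equiv _ (output_sum_unique hv hw hr)).
have [w0 hw0 e0] := realizer_output hv.
have ew : sequiv w w0.
  apply: (floorv_inj k_gt0 (sharp_ket_supported k_gt0 hw) (sharp_ket_supported k_gt0 hw0)).
  by rewrite -hA -floorv_output_sum (floorv_equiv _ e0).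
have [hM eM] := app_evaluates hv; have [s' [hs' es']] := evaluates_in_reduces hM.
by exists s'; split=> //; apply: seq_trans es' (seq_trans eM _); apply: seq_sym (seq_trans ew e0).
Qed.

Lemma realizer_mx_unit c : cdot c c = 1 -> cdot (realizer_mx *m c) (realizer_mx *m c) = 1.
Proof.
move=> /(sem_ket_sum n_gt0) /realizer_output [w hw e].
by rewrite -floorv_output_sum -(floorv_ket_sum n_gt0 c) -(floorv_equiv _ e) (sharp_unit_norm k_gt0).
Qed.

End Output.

Lemma realizer_unit_preserving_mx : exists A : 'M[algC]_(2 ^ k, 2 ^ n),
  represents n k lam (mulmx A) /\ forall c, cdot c c = 1 -> cdot (A *m c) (A *m c) = 1.
Proof.
have [M hM] := uniform_evaluation_bound.
by exists (realizer_mx M); split; [apply: represents_realizer_mx | apply: realizer_mx_unit].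
Qed.

End Realizer.

Theorem mainTheorem3 (n k : nat) : (1 <= n)%N -> (1 <= k)%N ->
  [/\ (* (1) *)
      ((n <= k)%N -> forall (x : nat) (b : sup), tclosed [::] (Lam x b) ->
        sem (TLolli (TSharp (Bn n)) (TSharp (Bn k))) env0 (STerm (Lam x b)) ->
        exists F : 'cV[algC]_(2 ^ n) -> 'cV[algC]_(2 ^ k),
          represents n k (Lam x b) F /\ isometry_op F),
      (* (2) *)
      (k = n -> forall (x : nat) (b : sup), tclosed [::] (Lam x b) ->
        sem (TLolli (TSharp (Bn n)) (TSharp (Bn n))) env0 (STerm (Lam x b)) ->
        exists F : 'cV[algC]_(2 ^ n) -> 'cV[algC]_(2 ^ n),
          represents n n (Lam x b) F /\ unitary_op F)
    & (* (3) *)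
      ((k < n)%N -> forall s : sup,
        ~ sem (TLolli (TSharp (Bn n)) (TSharp (Bn k))) env0 s)].
Proof.
move=> n_gt0 k_gt0; split.
- move=> _ x b _ [x' [b' [[-> ->] [_ hlam]]]].
  have [A [hA A_unit]] := realizer_unit_preserving_mx n_gt0 k_gt0 hlam.
  by exists (mulmx A); split=> // u v; apply: unit_preserving_isometry.
- move=> _ x b _ [x' [b' [[-> ->] [_ hlam]]]].
  have [A [hA A_unit]] := realizer_unit_preserving_mx n_gt0 n_gt0 hlam.
  by exists (mulmx A); split=> // u v; apply: unit_preserving_isometry.
- move=> k_lt_n s [x [b [_ [_ hlam]]]].
  have [A [_ A_unit]] := realizer_unit_preserving_mx n_gt0 k_gt0 hlam.
  by have := unit_preserving_dim_le A_unit; rewrite leq_exp2l // leqNgt k_lt_n.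
Qed.
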